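(* For every integer $n>1$ there exists a nonassociative noncommutative C-loop whose nucleus has exactly $n$ elements.
   Context: A C-loop is a loop satisfying $x(y(yz))=((xy)y)z$ for all $x,y,z$. The nucleus of a loop is the set of elements $a$ with $a(yz)=(ay)z$, $y(az)=(ya)z$, $y(za)=(yz)a$ for all $y,z$. *)

From Stdlib Require Import List.
Import ListNotations.

Definition is_loop {L : Type} (op : L -> L -> L) (e : L) : Prop :=
  (forall x, op e x = x /\ op x e = x) /\
  (forall a b, exists! x, op a x = b) /\
  (forall a b, exists! y, op y a = b).

Definition is_C_identity {L : Type} (op : L -> L -> L) : Prop :=
  forall x y z, op x (op y (op y z)) = op (op (op x y) y) z.

Definition is_C_loop {L : Type} (op : L -> L -> L) (e : L) : Prop :=
  is_loop op e /\ is_C_identity op.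

Definition in_nucleus {L : Type} (op : L -> L -> L) (a : L) : Prop :=
  forall y z,
    op a (op y z) = op (op a y) z /\
    op y (op a z) = op (op y a) z /\
    op y (op z a) = op (op y z) a.

Definition associative_op {L : Type} (op : L -> L -> L) : Prop :=
  forall x y z, op x (op y z) = op (op x y) z.

Definition commutative_op {L : Type} (op : L -> L -> L) : Prop :=
  forall x y, op x y = op y x.

Definition has_exactly {L : Type} (P : L -> Prop) (n : nat) : Prop :=
  exists l : list L, NoDup l /\ length l = n /\ (forall a, In a l <-> P a).

(* The Steiner loop of the affine plane AG(2,3) (the nine points of F_3^2 and
   an identity, the product of two distinct points being the third point of
   their line) is a commutative, nonassociative C-loop with trivial nucleus.
   Its central extension by Z/n along a normalized cocycle f,
   (x,a)(y,b) = (xy, a+b+f(x,y)), is a loop whose nucleus is {e} x Z/n; it is a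
   C-loop when f satisfies the cocycle form of the C-law, and it is
   noncommutative when f is not symmetric.  A 0/1-valued cocycle satisfying the
   C-law over the integers works for every n at once. *)

From mathcomp Require Import all_boot all_algebra.

Set Implicit Arguments.
Unset Strict Implicit.
Unset Printing Implicit Defensive.

Import GRing.Theory.
Local Open Scope ring_scope.

Lemma InP (T : eqType) (x : T) (s : seq T) : reflect (List.In x s) (x \in s).
Proof.
elim: s => [|y s IH] /=; first by constructor.
rewrite in_cons; apply: (iffP orP) => [[/eqP->|/IH]|[->|/IH]]; auto.
Qed.

Lemma uniq_NoDup (T : eqType) (s : seq T) : uniq s -> List.NoDup s.
Proof.
elim: s => [|x s IH] /=; first by constructor.
by case/andP=> x_notin_s /IH; constructor=> // /InP; apply/negP.
Qed.

Lemma size_length (T : Type) (s : seq T) : size s = length s.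
Proof. by elim: s => //= x s ->. Qed.

Lemma has_exactly_uniq (T : eqType) (P : T -> Prop) (s : seq T) :
  uniq s -> (forall x, x \in s <-> P x) -> has_exactly P (size s).
Proof.
move=> s_uniq memP; exists s; split; first exact: uniq_NoDup.
by split=> [|x]; [rewrite size_length | split=> [/InP/memP | /memP/InP]].
Qed.

Lemma has_exactly_fiber (T : eqType) (G : finType) (P : T * G -> Prop) (t : T) :
  (forall p, P p <-> p.1 = t) -> has_exactly P #|G|.
Proof.
move=> Pt; rewrite cardE -(size_map (pair t)).
apply: has_exactly_uniq => [|[s a]].
  by rewrite map_inj_uniq ?enum_uniq // => a b [].
rewrite Pt /=; split=> [/mapP [b _ [-> _]] // | ->].
by apply/mapP; exists a; rewrite ?mem_enum.
Qed.

Section CentralExtension.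

Variables (S : Type) (op : S -> S -> S) (e : S) (G : zmodType) (f : S -> S -> G).

Definition central_ext (p q : S * G) : S * G := (op p.1 q.1, p.2 + q.2 + f p.1 q.1).

Definition C_cocycle : Prop :=
  forall x y z, f y z + f y (op y z) + f x (op y (op y z)) =
                f x y + f (op x y) y + f (op (op x y) y) z.

Lemma central_ext_C_identity :
  is_C_identity op -> C_cocycle -> is_C_identity central_ext.
Proof.
move=> opC fC [x a] [y b] [z c]; rewrite /central_ext /=; congr pair; first exact: opC.
rewrite !addrA [LHS](ACl ((1*2*3*4)*(5*6*7))) /= fC.
by rewrite [RHS](ACl ((1*2*4*6)*(3*5*7))).
Qed.

Lemma central_ext_nucleus_fst p : in_nucleus central_ext p -> in_nucleus op p.1.
Proof.
move=> p_nuc y z.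
by have [/(congr1 fst) ? [/(congr1 fst) ? /(congr1 fst) ?]] := p_nuc (y, 0) (z, 0).
Qed.

Lemma central_ext_not_associative : ~ associative_op op -> ~ associative_op central_ext.
Proof.
move=> op_nA extA; apply: op_nA => x y z.
by have [] := extA (x, 0) (y, 0) (z, 0).
Qed.

Lemma central_ext_not_commutative x y : f x y != f y x -> ~ commutative_op central_ext.
Proof.
move=> fxy extC; have [_] := extC (x, 0) (y, 0).
by rewrite !add0r => fxy'; rewrite fxy' eqxx in fxy.
Qed.

Hypotheses (op_loop : is_loop op e)
  (f_e_l : forall x, f e x = 0) (f_e_r : forall x, f x e = 0).

Lemma central_ext_loop : is_loop central_ext (e, 0).
Proof.
have [op_e [ldiv rdiv]] := op_loop; split; [|split].
- move=> [x a]; rewrite /central_ext /= f_e_l f_e_r !addr0 add0r.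
  by have [-> ->] := op_e x.
- move=> [s a] [u d]; have [t [st t_uniq]] := ldiv s u.
  exists (t, d - a - f s t); split=> [|[t' c] /= [st' <-]].
  + by rewrite /central_ext /= st addrA [a + _]addrC subrK subrK.
  + by rewrite -(t_uniq _ st') addrAC addrK addrC addKr.
- move=> [s a] [u d]; have [t [ts t_uniq]] := rdiv s u.
  exists (t, d - a - f t s); split=> [|[t' c] /= [t's <-]].
  + by rewrite /central_ext /= ts addrAC subrK subrK.
  + by rewrite -(t_uniq _ t's) addrAC !addrK.
Qed.

Lemma central_ext_nucleus_id a : in_nucleus central_ext (e, a).
Proof.
have [op_e _] := op_loop; move=> [y b] [z c]; rewrite /central_ext /=.
have op1x x : op e x = x by have [] := op_e x.
have opx1 x : op x e = x by have [] := op_e x.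
rewrite !op1x !opx1 !f_e_l !f_e_r !addr0.
by split; [|split]; congr pair; rewrite !addrA // (addrAC _ a).
Qed.

Lemma in_nucleus_central_ext p :
  (forall s, in_nucleus op s -> s = e) -> in_nucleus central_ext p <-> p.1 = e.
Proof.
move=> op_nuc; split=> [/central_ext_nucleus_fst/op_nuc //|].
by case: p => s a /= ->; exact: central_ext_nucleus_id.
Qed.

End CentralExtension.

Section SteinerLoop.

Variables (S : Type) (op : S -> S -> S) (e : S).
Hypotheses (op1x : left_id e op) (opC : commutative op)
  (opK : forall x, involutive (op x)).

Lemma steiner_loop : is_loop op e.
Proof.
split; [|split].
- by move=> x; rewrite [op x e]opC op1x.
- by move=> a b; exists (op a b); split=> [|x <-]; rewrite opK.
- move=> a b; exists (op b a).
  by split=> [|y <-]; rewrite opC [op _ a]opC opK.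
Qed.

Lemma steiner_C_identity : is_C_identity op.
Proof. by move=> x y z; rewrite [op x y]opC [op (op y x) y]opC !opK. Qed.

(* Since y(yz) = z and (xy)y = x, the C-law for f splits into two one-sided
   conditions. *)
Lemma steiner_C_cocycle (G : zmodType) (f : S -> S -> G) :
    (forall y z, f y z + f y (op y z) = f y y) ->
    (forall y z, f z y + f (op z y) y = f y y) ->
  C_cocycle op f.
Proof.
move=> f_l f_r x y z; rewrite [op x y]opC [op (op y x) y]opC !opK.
by rewrite f_l -[op y x]opC f_r.
Qed.

End SteinerLoop.

Definition point := ('Z_3 * 'Z_3)%type.

(* Three distinct points of AG(2,3) are collinear iff they sum to 0. *)
Definition affine_steiner (x y : option point) : option point :=
  match x, y with
  | None, _ => y
  | _, None => x
  | Some p, Some q => if p == q then None else Some (- (p + q))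
  end.

Definition affine_cocycle (x y : option point) : nat :=
  match x, y with
  | Some (a, b), Some (c, d) => (c - a == 1) + (c == a) && (d - b != -1)
  | _, _ => 0
  end.

Lemma Z3_cases (x : 'Z_3) : [\/ x = 0, x = 1 | x = 2].
Proof.
by case: x => [[|[|[|//]]] ?]; [constructor 1 | constructor 2 | constructor 3];
  apply: val_inj.
Qed.

Ltac expand_Z3 :=
  repeat match goal with a : 'Z_3 |- _ => have [->|->|->] := Z3_cases a; clear a end.

Lemma affine_steinerC : commutative affine_steiner.
Proof. by case=> [p|] [q|] //=; rewrite eq_sym addrC. Qed.

Lemma affine_steinerK x : involutive (affine_steiner x).
Proof. by case: x => [[a b]|] [[c d]|] //=; rewrite ?eqxx //; apply/eqP; expand_Z3. Qed.

Lemma affine_cocycle_l y z :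
  (affine_cocycle y z + affine_cocycle y (affine_steiner y z) = affine_cocycle y y)%N.
Proof. by case: y z => [[a b]|] [[c d]|] //; expand_Z3. Qed.

Lemma affine_cocycle_r y z :
  (affine_cocycle z y + affine_cocycle (affine_steiner z y) y = affine_cocycle y y)%N.
Proof. by case: y z => [[a b]|] [[c d]|] //; expand_Z3. Qed.

(* p, p + (1,0) and p + (0,1) are not collinear. *)
Lemma affine_steiner_nucleus s : in_nucleus affine_steiner s -> s = None.
Proof.
case: s => // p /(_ (Some (p + (1, 0))) (Some (p + (0, 1)))) [/eqP].
by case: p => a b; expand_Z3.
Qed.

Theorem corollary3p4 :
  forall n : nat, (1 < n)%coq_nat ->
  exists (L : Type) (op : L -> L -> L) (e : L),
    is_C_loop op e /\
    ~ associative_op op /\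
    ~ commutative_op op /\
    has_exactly (in_nucleus op) n.
Proof.
move=> n /ltP n_gt1.
pose f x y : 'Z_n := (affine_cocycle x y)%:R.
have f_e_r x : f x None = 0 by case: x => [[]|].
have S_loop : is_loop affine_steiner None.
  exact: (@steiner_loop _ _ None (fun=> erefl) affine_steinerC affine_steinerK).
exists (option point * 'Z_n)%type, (central_ext affine_steiner f), (None, 0).
split; [split | split; [|split]].
- exact: central_ext_loop.
- apply: central_ext_C_identity.
    exact: steiner_C_identity affine_steinerC affine_steinerK.
  by apply: (steiner_C_cocycle affine_steinerC affine_steinerK) => y z;
    rewrite /f -natrD ?affine_cocycle_l ?affine_cocycle_r.
- apply: central_ext_not_associative => S_assoc.
  suff /affine_steiner_nucleus : in_nucleus affine_steiner (Some 0) by [].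
  by move=> y z; split; [|split]; apply: S_assoc.
- (* f((0,0),(0,1)) = 1 while f((0,1),(0,0)) = 0. *)
  apply: (@central_ext_not_commutative _ _ _ _ (Some (0, 0)) (Some (0, 1))).
  by rewrite /f /=.
- have card_Zn : #|'Z_n| = n by rewrite card_ord Zp_cast.
  rewrite -[X in has_exactly _ X]card_Zn; apply: has_exactly_fiber => p.
  exact: in_nucleus_central_ext affine_steiner_nucleus.
Qed.
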